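(* Let $\mathcal A'$ be a tree weakening of a finite tree multi-algebra $\mathcal A$. Then (1) every basic relation closed under projection for $\mathcal A'$ is closed under projection for $\mathcal A$; and (2) every scenario that is algebraically closed for $\mathcal A'$ is algebraically closed for $\mathcal A$.
   Context: A finite non-associative algebra is a tuple $(\mathcal A,\cup,\neg,\emptyset,\mathcal B,\diamond,\overline{\cdot},e)$ where $(\mathcal A,\cup,\neg,\emptyset,\mathcal B)$ is a finite Boolean algebra and for all $x,y,z$: $\overline{\overline x}=x$, $\overline{x\cup y}=\overline x\cup\overline y$, $\overline{x\diamond y}=\overline y\diamond\overline x$, $e\diamond x=x\diamond e=x$, $x\diamond(y\cup z)=(x\diamond y)\cup(x\diamond z)$, $(x\diamond y)\cap\overline z=\emptyset\iff(y\diamond z)\cap\overline x=\emptyset$. $r\subseteq r'$ means $r\cup r'=r'$; atoms are basic relations; $\mathsf B_i$ denotes the atoms of $\mathcal A_i$. A projection operator from $\mathcal A$ to $\mathcal A'$ is a map $\Rsh$ with $\Rsh(r\cup r')=\Rsh r\cup\Rsh r'$ and $\Rsh\overline r=\overline{\Rsh r}$. A finite multi-algebra is a product $\mathcal A_1\times\cdots\times\mathcal A_m$ of finite non-associative algebras with projection operators $\Rsh_i^j:\mathcal A_i\to\mathcal A_j$ for distinct $i,j$; operations componentwise on $R=(R_1,\dots,R_m)$; $R$ basic if all $R_i$ are atoms; $R$ closed under projection if $R_j\subseteq\Rsh_i^jR_i$ for all distinct $i,j$. A network is a finite set $E$ of variables with a relation $N^{xy}$ for distinct $x,y$, $N^{yx}=\overline{N^{xy}}$;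 a scenario if all $N^{xy}$ basic; closed under composition if $N^{xz}\subseteq N^{xy}\diamond N^{yz}$ for all distinct $x,y,z$; algebraically closed if closed under composition and every $N^{xy}$ is closed under projection. The inverse projection $\check\Rsh_i^j:\mathcal A_j\to\mathcal A_i$ of $\Rsh_i^j$ is defined by: for $b\in\mathsf B_i$, $b'\in\mathsf B_j$, $b\subseteq\check\Rsh_i^jb'\iff b'\subseteq\Rsh_i^jb$. An anti-tree structure on $V$ is a directed graph $(V,E)$ with a root $r$ such that every $v\ne r$ has exactly one directed path to $r$; write $v\to v'$ for an edge. A plenary anti-tree structure of $\mathcal A$ is an anti-tree structure $\mathtt A$ on $\{1,\dots,m\}$ such that for all distinct $i,j$, with $i=k_0\to\cdots\to k_s\leftarrow\cdots\leftarrow k_{s+t+1}=j$ the shortest oriented chain between $i$ and $j$ in $\mathtt A$, every $b\in\mathsf B_i$ satisfies $\Rsh_i^jb\supseteq\check\Rsh_j^{k_{s+t}}\cdots\check\Rsh_{k_{s+1}}^{k_s}\Rsh_{k_{s-1}}^{k_s}\cdots\Rsh_i^{k_1}b$. $\mathcal A$ is a tree multi-algebra if it has one. $\mathcal A'$ is a weakening of $\mathcal A$ if it has the same algebras and operations and $\Rsh_i^jb\subseteq\Rsh_i'^jb$ for all distinct $i,j$ and atoms $b$ of $\mathcal A_i$ ($\Rsh'$ the projections of $\mathcal A'$). It is a tree weakening if moreover there is a plenary anti-tree structure $\mathtt A$ of $\mathcal A$ such that $\Rsh_i^jb=\Rsh_i'^jb$ for all atoms $b$ of $\mathcal A_i$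 whenever $i\to j$ is an edge of $\mathtt A$. *)

From mathcomp Require Import all_boot.

(* Its finite Boolean algebra is represented
   as the powerset {set atom_t} of its (finite) set of atoms (basic relations):
   union = :|:, intersection = :&:, empty = set0, top = setT, r ⊆ r' = \subset. *)
Record naAlg := NaAlg {
  atom_t : finType;
  conv : {set atom_t} -> {set atom_t};
  comp : {set atom_t} -> {set atom_t} -> {set atom_t};
  ident : {set atom_t}
}.

Definition naAlg_axioms (A : naAlg) : Prop :=
  (forall x, conv A (conv A x) = x) /\
  (forall x y, conv A (x :|: y) = conv A x :|: conv A y) /\
  (forall x y, conv A (comp A x y) = comp A (conv A y) (conv A x)) /\
  (forall x, comp A (ident A) x = x /\ comp A x (ident A) = x) /\
  (forall x y z, comp A x (y :|: z) = comp A x y :|: comp A x z) /\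
  (forall x y z, (comp A x y :&: conv A z == set0) = (comp A y z :&: conv A x == set0)).

Definition is_atom {A : naAlg} (X : {set atom_t A}) : Prop := exists b, X = [set b].

Definition is_projection {A1 A2 : naAlg} (f : {set atom_t A1} -> {set atom_t A2}) : Prop :=
  (forall r r', f (r :|: r') = f r :|: f r') /\ (forall r, f (conv A1 r) = conv A2 (f r)).

(* a family of projection maps Rsh_i^j on the multi-algebra A_1 x ... x A_m,
   indices 1..m represented by 'I_m *)
Definition projT {m : nat} (A : 'I_m -> naAlg) :=
  forall i j : 'I_m, {set atom_t (A i)} -> {set atom_t (A j)}.

Definition multi_algebra {m} {A : 'I_m -> naAlg} (P : projT A) : Prop :=
  (forall i, naAlg_axioms (A i)) /\ (forall i j, i != j -> is_projection (P i j)).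

(* inverse projection check-Rsh_i^j : A_j -> A_i; defined on atoms by
   b \subset check b' <-> b' \subset Rsh_i^j b, extended by unions *)
Definition inv_proj {m} {A : 'I_m -> naAlg} (P : projT A) (i j : 'I_m)
  (X : {set atom_t (A j)}) : {set atom_t (A i)} :=
  [set b | [exists b' in X, b' \in P i j [set b]]].

(* An oriented chain k0 -> ... -> k_s <- ... <- k_n, given by its start k = k0,
   the list ks = [k1; ...; kn] and the number s of upward steps. *)
Fixpoint updown {m} (E : rel 'I_m) (s : nat) (k : 'I_m) (ks : seq 'I_m) : bool :=
  match ks with
  | [::] => s == 0
  | k' :: ks' => (if 0 < s then E k k' else E k' k) && updown E s.-1 k' ks'
  end.

Definition shortest_chain {m} (E : rel 'I_m) (i : 'I_m) (ks : seq 'I_m) (s : nat) : Prop :=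
  updown E s i ks /\
  forall ks' s', updown E s' i ks' -> last i ks' = last i ks -> size ks <= size ks'.

Fixpoint chain_op {m} {A : 'I_m -> naAlg} (P : projT A) (s : nat) (k : 'I_m)
  (ks : seq 'I_m) (X : {set atom_t (A k)}) {struct ks} : {set atom_t (A (last k ks))} :=
  match ks return {set atom_t (A (last k ks))} with
  | [::] => X
  | k' :: ks' => chain_op P s.-1 k' ks'
                   (if 0 < s then P k k' X else inv_proj P k' k X)
  end.

Definition dpath_to {m} (E : rel 'I_m) (v r : 'I_m) (p : seq 'I_m) : Prop :=
  path E v p /\ last v p = r /\ uniq (v :: p).

Definition anti_tree {m} (E : rel 'I_m) (r : 'I_m) : Prop :=
  forall v, v != r -> exists p, dpath_to E v r p /\ forall q, dpath_to E v r q -> q = p.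

Definition plenary {m} {A : 'I_m -> naAlg} (P : projT A) (E : rel 'I_m) (r : 'I_m) : Prop :=
  anti_tree E r /\
  forall i ks s, shortest_chain E i ks s -> last i ks != i ->
    forall b : atom_t (A i), chain_op P s i ks [set b] \subset P i (last i ks) [set b].

Definition tree_multi {m} {A : 'I_m -> naAlg} (P : projT A) : Prop :=
  exists E r, plenary P E r.

Definition weakening {m} {A : 'I_m -> naAlg} (P P' : projT A) : Prop :=
  forall i j, i != j -> forall b : atom_t (A i), P i j [set b] \subset P' i j [set b].

Definition tree_weakening {m} {A : 'I_m -> naAlg} (P P' : projT A) : Prop :=
  weakening P P' /\
  exists E r, plenary P E r /\
    forall i j, E i j -> i != j -> forall b : atom_t (A i), P i j [set b] = P' i j [set b].

Definition mrel {m} (A : 'I_m -> naAlg) := forall i : 'I_m, {set atom_t (A i)}.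

Definition basic {m} {A : 'I_m -> naAlg} (R : mrel A) : Prop := forall i, is_atom (R i).

Definition closed_proj {m} {A : 'I_m -> naAlg} (P : projT A) (R : mrel A) : Prop :=
  forall i j, i != j -> R j \subset P i j (R i).

Definition is_network {m} {A : 'I_m -> naAlg} {V : finType} (N : V -> V -> mrel A) : Prop :=
  forall x y, x != y -> forall i, N y x i = conv (A i) (N x y i).

Definition scenario {m} {A : 'I_m -> naAlg} {V : finType} (N : V -> V -> mrel A) : Prop :=
  forall x y, x != y -> basic (N x y).

Definition closed_comp {m} {A : 'I_m -> naAlg} {V : finType} (N : V -> V -> mrel A) : Prop :=
  forall x y z, x != y -> y != z -> x != z ->
    forall i, N x z i \subset comp (A i) (N x y i) (N y z i).

Definition alg_closed {m} {A : 'I_m -> naAlg} (P : projT A) {V : finType}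
  (N : V -> V -> mrel A) : Prop :=
  closed_comp N /\ forall x y, x != y -> closed_proj P (N x y).

From mathcomp Require Import all_boot.
From Stdlib Require Import Classical Wf_nat.

(* In the anti-tree, i reaches the root upwards and the root reaches
   j downwards, so a shortest oriented chain i = k0, ..., kn = j exists, and no two
   consecutive ki coincide (such a repetition could be cut out).  Each step of the
   chain is a tree edge, on which Rsh and Rsh' agree on atoms; hence a basic R
   closed under Rsh' satisfies R_{k(t+1)} ⊆ Rsh R_{kt} on upward steps and
   R_{k(t+1)} ⊆ check-Rsh R_{kt} on downward ones.  Composing, R_j lies in the
   chain composite of R_i, which plenarity bounds by Rsh_i^j R_i. *)

Lemma ex_least_nat (Q : nat -> Prop) :
  (exists n, Q n) -> exists n, Q n /\ forall k, Q k -> n <= k.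
Proof.
move=> exQ.
have [n [[Qn least] _]] :=
  dec_inh_nat_subset_has_unique_least_element Q (fun n => classic (Q n)) exQ.
by exists n; split=> // k /least /leP.
Qed.

Lemma proj_subset {A1 A2 : naAlg} {f : {set atom_t A1} -> {set atom_t A2}}
    {X Y : {set atom_t A1}} :
  is_projection f -> X \subset Y -> f X \subset f Y.
Proof. by move=> [fU _] /setUidPr <-; rewrite fU subsetUl. Qed.

Section OrientedChains.

Context {m : nat} {E : rel 'I_m}.

Lemma updown_path {v p} : path E v p -> updown E (size p) v p.
Proof. by elim: p v => [|w p IHp] v //= /andP[-> /IHp ->]. Qed.

Lemma updown_rcons {ks k x} :
  updown E 0 k ks -> E x (last k ks) -> updown E 0 k (rcons ks x).
Proof.
elim: ks k => [|k' ks IHks] k /=; first by move=> _ ->.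
by move=> /andP[-> /IHks]; apply.
Qed.

Lemma updown_rev_path {v p} : path E v p ->
  exists ks, updown E 0 (last v p) ks /\ last (last v p) ks = v.
Proof.
elim: p v => [|w p IHp] v /=; first by exists [::].
move=> /andP[Evw /IHp [ks [ud lastv]]].
exists (rcons ks v); rewrite last_rcons; split=> //.
by apply: updown_rcons; rewrite // lastv.
Qed.

Lemma updown_cat {ks1 ks2 k s} :
  updown E s k ks1 -> updown E 0 (last k ks1) ks2 -> updown E s k (ks1 ++ ks2).
Proof.
elim: ks1 k s => [|k' ks IHks] k s /=; first by move=> /eqP ->.
by move=> /andP[-> /IHks]; apply.
Qed.

Lemma anti_tree_chain {r} i j : anti_tree E r ->
  exists ks s, updown E s i ks /\ last i ks = j.
Proof.
move=> anti.
have to_root v : exists p, path E v p /\ last v p = r.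
  have [->|nvr] := eqVneq v r; first by exists [::].
  by have [p [[? [? _]] _]] := anti v nvr; exists p.
have [p [Eip lastp]] := to_root i; have [q [Ejq lastq]] := to_root j.
have [ks [ud lastks]] := updown_rev_path Ejq; rewrite lastq in ud lastks.
exists (p ++ ks), (size p); rewrite last_cat lastp; split=> //.
by apply: updown_cat; rewrite ?lastp // updown_path.
Qed.

Lemma shortest_chain_exists {i ks s} : updown E s i ks ->
  exists ks' s', shortest_chain E i ks' s' /\ last i ks' = last i ks.
Proof.
move=> ud.
pose has_chain n := exists ks' s', [/\ updown E s' i ks', last i ks' = last i ks
                                     & size ks' = n].
have [|n [[ks' [s' [ud' last' <-]]] least]] := @ex_least_nat has_chain.
  by exists (size ks), ks, s.
exists ks', s'; split=> //; split=> // ks'' s'' ud'' last''.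
by apply: least; exists ks'', s''; rewrite last'' last'.
Qed.

Lemma updown_shorten {ks k s} : updown E s k ks ->
  ~~ path (fun a b => a != b) k ks ->
  exists ks' s', [/\ s' <= s, updown E s' k ks', last k ks' = last k ks
                   & size ks' < size ks].
Proof.
elim: ks k s => [|k' ks IHks] k s //= /andP[step ud].
have [->|_ /= repeat] := eqVneq k k'.
  by move=> _; exists ks, s.-1; split; rewrite ?leq_pred.
have [ks' [s' [les' ud' last' size']]] := IHks k' s.-1 ud repeat.
case: s step ud les' => [|s] /= step _ les'.
  move: les'; rewrite leqn0 => /eqP s'0; subst s'.
  by exists (k' :: ks'), 0; rewrite /= step ud'.
by exists (k' :: ks'), s'.+1; rewrite /= step ud'.
Qed.

Lemma shortest_chain_neq {i ks s} : shortest_chain E i ks s ->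
  path (fun a b => a != b) i ks.
Proof.
move=> [ud shortest]; apply/negPn/negP => /(updown_shorten ud).
move=> [ks' [s' [_ ud' last' size']]].
by move: (shortest _ _ ud' last'); rewrite leqNgt size'.
Qed.

End OrientedChains.

Section ChainTransport.

Context {m : nat} {A : 'I_m -> naAlg} {P P' : projT A} {E : rel 'I_m} {R : mrel A}.
Hypothesis P_proj : forall i j, i != j -> is_projection (P i j).
Hypothesis P_edge : forall i j, E i j -> i != j -> forall b, P i j [set b] = P' i j [set b].
Hypothesis R_basic : basic R.
Hypothesis R_closed : closed_proj P' R.

Lemma closed_proj_edge_up {k k'} {X : {set atom_t (A k)}} : E k k' -> k != k' ->
  R k \subset X -> R k' \subset P k k' X.
Proof.
move=> Ekk' nkk' RkX; have [b Rkb] := R_basic k.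
apply: subset_trans (proj_subset (P_proj _ _ nkk') RkX).
by rewrite Rkb P_edge // -Rkb R_closed.
Qed.

Lemma closed_proj_edge_down {k k'} {X : {set atom_t (A k)}} : E k' k -> k != k' ->
  R k \subset X -> R k' \subset inv_proj P k' k X.
Proof.
move=> Ek'k nkk'; have [b Rkb] := R_basic k; have [c Rk'c] := R_basic k'.
have nk'k : k' != k by rewrite eq_sym.
have := R_closed _ _ nk'k; rewrite Rkb Rk'c -P_edge // !sub1set => bPc bX.
by rewrite inE; apply/existsP; exists b; rewrite bX.
Qed.

Lemma closed_proj_chain_op {ks k s} {X : {set atom_t (A k)}} :
  updown E s k ks -> path (fun a b => a != b) k ks ->
  R k \subset X -> R (last k ks) \subset chain_op P s k ks X.
Proof.
elim: ks k s X => [|k' ks IHks] k s X //= /andP[step ud] /andP[nkk' neq] RkX.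
apply: IHks => //; case: ifP step => _ step.
  exact: closed_proj_edge_up.
exact: closed_proj_edge_down.
Qed.

End ChainTransport.

Lemma tree_weakening_closed_proj {m : nat} {A : 'I_m -> naAlg} {P P' : projT A}
    {R : mrel A} :
  (forall i j, i != j -> is_projection (P i j)) -> tree_weakening P P' ->
  basic R -> closed_proj P' R -> closed_proj P R.
Proof.
move=> P_proj [_ [E [r [[anti plen] P_edge]]]] R_basic R_closed i j.
have [ks0 [s0 [ud0 <-]]] := anti_tree_chain i j anti.
have [ks [s [short <-]]] := shortest_chain_exists ud0.
move=> nij.
have := closed_proj_chain_op P_proj P_edge R_basic R_closed
          short.1 (shortest_chain_neq short) (subxx _).
have [b ->] := R_basic i => /subset_trans; apply.
by apply: plen; rewrite // eq_sym.
Qed.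

Theorem lemma6p29 (m : nat) (A : 'I_m -> naAlg) (P P' : projT A) :
  multi_algebra P -> multi_algebra P' -> tree_multi P -> tree_weakening P P' ->
  (forall R : mrel A, basic R -> closed_proj P' R -> closed_proj P R) /\
  (forall (V : finType) (N : V -> V -> mrel A),
     is_network N -> scenario N -> alg_closed P' N -> alg_closed P N).
Proof.
move=> [_ P_proj] _ _ tw.
have closed R : basic R -> closed_proj P' R -> closed_proj P R :=
  tree_weakening_closed_proj P_proj tw.
split=> // V N _ scen [N_comp N_proj]; split=> // x y nxy.
exact: closed (scen x y nxy) (N_proj x y nxy).
Qed.
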